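(* Fix an integer $k\geq1$ and $V=\{0,\ldots,k\}$. If a Boolean function $\varphi$ on $V$ satisfies $\varphi\simeq\bot$, then $\varphi$ is fragmentable.
   Context: A valuation is a subset $\nu\subseteq V$; $\nu^{(l)}$ is $\nu$ with membership of $l$ flipped. A Boolean function on $V$ is a map $\varphi:2^V\to\{\text{false},\text{true}\}$; $\mathrm{sat}(\varphi)$ is its set of satisfying valuations; $\bot$ is the constant-false function. Write $\varphi\xrightarrow{+(\nu,l)}\varphi'$ if $\nu,\nu^{(l)}\notin\mathrm{sat}(\varphi)$ and $\mathrm{sat}(\varphi')=\mathrm{sat}(\varphi)\cup\{\nu,\nu^{(l)}\}$, and $\varphi\xrightarrow{-(\nu,l)}\varphi'$ if $\varphi'\xrightarrow{+(\nu,l)}\varphi$. Write $\varphi\xrightarrow{\pm}\varphi'$ if one of these holds for some $\nu,l$; $\simeq$ is the reflexive-transitive closure of $\xrightarrow{\pm}$ (an equivalence relation). $\varphi$ is degenerate if there is $l\in V$ with $\varphi(\nu)=\varphi(\nu^{(l)})$ for all $\nu$. Two functions are disjoint if no valuation satisfies both. A $\neg$-$\vee$-template is a Boolean circuit all of whose internal gates are $\neg$- or $\vee$-gates (a single leaf is allowed); its leaves $l_0,\ldots,l_n$ are holes. $T[\varphi_0,\ldots,\varphi_n]$ is obtained by substituting $\varphi_i$ for $l_i$; it is deterministic if, for every $\vee$-gate of the template, distinct inputs compute disjoint functions. $\varphi$ is fragmentable if there exist a template $T$ and degenerate $\varphi_0,\ldots,\varphi_n$ with $T[\varphi_0,\ldots,\varphi_n]$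 deterministic and equivalent to $\varphi$. *)

From mathcomp Require Import all_boot.
From Stdlib Require Import Relations.
Set Implicit Arguments. Unset Strict Implicit. Unset Printing Implicit Defensive.

(* Variables V = 'I_n ; valuations are subsets of V. *)
Definition valuation (n : nat) := {set 'I_n}.

Definition bfun (n : nat) := valuation n -> bool.

Definition flip n (nu : valuation n) (l : 'I_n) : valuation n :=
  if l \in nu then nu :\ l else l |: nu.

Definition sat n (phi : bfun n) : {set valuation n} := [set nu | phi nu].

Definition botf n : bfun n := fun _ => false.

Definition plus_step n (nu : valuation n) (l : 'I_n) (phi phi' : bfun n) : Prop :=
  nu \notin sat phi /\ flip nu l \notin sat phi /\
  sat phi' = sat phi :|: [set nu; flip nu l].

Definition minus_step n (nu : valuation n) (l : 'I_n) (phi phi' : bfun n) : Prop :=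
  plus_step nu l phi' phi.

Definition pm_step n (phi phi' : bfun n) : Prop :=
  exists nu l, plus_step nu l phi phi' \/ minus_step nu l phi phi'.

Definition simeq n : relation (bfun n) := clos_refl_trans (bfun n) (@pm_step n).

Definition degenerate n (phi : bfun n) : Prop :=
  exists l : 'I_n, forall nu, phi nu = phi (flip nu l).

Definition disjoint_fun n (phi psi : bfun n) : Prop :=
  forall nu, ~~ (phi nu && psi nu).

(* A neg-or template whose holes have already been filled with Boolean
   functions, i.e. T[phi_0, ..., phi_m]. *)
Inductive filled_template (n : nat) : Type :=
| Hole of bfun n
| NegG of filled_template n
| OrG of filled_template n & filled_template n.

Fixpoint eval n (T : filled_template n) : bfun n :=
  match T with
  | Hole phi => phi
  | NegG t => fun nu => ~~ eval t nu
  | OrG t1 t2 => fun nu => eval t1 nu || eval t2 nu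
  end.

Fixpoint deterministic n (T : filled_template n) : Prop :=
  match T with
  | Hole _ => True
  | NegG t => deterministic t
  | OrG t1 t2 => disjoint_fun (eval t1) (eval t2) /\ deterministic t1 /\ deterministic t2
  end.

Fixpoint holes_degenerate n (T : filled_template n) : Prop :=
  match T with
  | Hole phi => degenerate phi
  | NegG t => holes_degenerate t
  | OrG t1 t2 => holes_degenerate t1 /\ holes_degenerate t2
  end.

Definition fragmentable n (phi : bfun n) : Prop :=
  exists T : filled_template n,
    holes_degenerate T /\ deterministic T /\ forall nu, eval T nu = phi nu.

(* Fragmentability is invariant under the moves +(nu,l) and -(nu,l).  The
   edge function with satisfying set {nu, nu^(l)} is degenerate in l.  Adding
   the edge to phi (disjoint from it) gives phi \/ edge, a deterministic or;
   removing it from phi (which contains it) gives ~(~phi \/ edge), where ~phi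
   and the edge are disjoint.  Hence every phi ~ bot is fragmentable, since
   bot is itself degenerate. *)
From mathcomp Require Import all_boot.

Set Implicit Arguments.
Unset Strict Implicit.
Unset Printing Implicit Defensive.

Lemma flipK n (l : 'I_n) : involutive (fun nu : valuation n => flip nu l).
Proof.
move=> nu; rewrite {2}/flip; case: ifP => nu_l; rewrite /flip.
  by rewrite in_setD1 eqxx /= setD1K.
by rewrite in_setU1 eqxx /= setU1K // nu_l.
Qed.

Definition edge_fun n (nu : valuation n) (l : 'I_n) : bfun n :=
  fun x => (x == nu) || (x == flip nu l).

Lemma degenerate_edge_fun n (nu : valuation n) (l : 'I_n) :
  degenerate (edge_fun nu l).
Proof.
have flip_eq := inj_eq (can_inj (flipK l)).
exists l => x; rewrite /edge_fun orbC flip_eq.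
by rewrite -[X in X == _](flipK l) flip_eq.
Qed.

Lemma plus_stepP n (nu : valuation n) (l : 'I_n) (phi phi' : bfun n) :
  plus_step nu l phi phi' ->
  disjoint_fun phi (edge_fun nu l) /\ phi' =1 (fun x => phi x || edge_fun nu l x).
Proof.
move=> [nu_phi [flip_phi /setP sat_phi']]; split.
  move=> x; apply/andP => -[phi_x /orP[] /eqP x_eq].
    by move: nu_phi; rewrite -x_eq inE phi_x.
  by move: flip_phi; rewrite -x_eq inE phi_x.
by move=> x; move: (sat_phi' x); rewrite !inE.
Qed.

Lemma fragmentable_eq n (phi psi : bfun n) :
  phi =1 psi -> fragmentable phi -> fragmentable psi.
Proof.
move=> phi_psi [T [degT [detT evalT]]].
by exists T; do 2!split=> //; move=> x; rewrite evalT.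
Qed.

Lemma fragmentable_degenerate n (phi : bfun n) :
  degenerate phi -> fragmentable phi.
Proof. by move=> deg_phi; exists (Hole phi). Qed.

Lemma fragmentable_neg n (phi : bfun n) :
  fragmentable phi -> fragmentable (fun x => ~~ phi x).
Proof.
move=> [T [degT [detT evalT]]].
by exists (NegG T); do 2!split=> //; move=> x /=; rewrite evalT.
Qed.

Lemma fragmentable_or n (phi psi : bfun n) :
  disjoint_fun phi psi -> fragmentable phi -> degenerate psi ->
  fragmentable (fun x => phi x || psi x).
Proof.
move=> dis [T [degT [detT evalT]]] deg_psi.
exists (OrG T (Hole psi)); split=> //=; split; last by move=> x; rewrite evalT.
by split=> // x; rewrite evalT.
Qed.

Lemma fragmentable_plus_step n (nu : valuation n) (l : 'I_n) (phi phi' : bfun n) :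
  plus_step nu l phi phi' -> fragmentable phi <-> fragmentable phi'.
Proof.
move=> /plus_stepP[dis phi'E]; split=> frag.
  apply: fragmentable_eq (fun x => esym (phi'E x)) _.
  exact: fragmentable_or frag (degenerate_edge_fun nu l).
have dis' : disjoint_fun (fun x => ~~ phi' x) (edge_fun nu l).
  by move=> x; rewrite phi'E; case: (edge_fun nu l x); rewrite ?orbT ?andbF.
apply: (fragmentable_eq (phi := fun x => ~~ (~~ phi' x || edge_fun nu l x))).
  move=> x; rewrite phi'E; case e: (edge_fun nu l x); last by rewrite !orbF negbK.
  by move: (dis x); rewrite e andbT orbT => /negbTE.
apply/fragmentable_neg/fragmentable_or => //; last exact: degenerate_edge_fun.
exact: fragmentable_neg.
Qed.

Lemma simeq_fragmentable n (phi psi : bfun n) :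
  simeq phi psi -> fragmentable phi <-> fragmentable psi.
Proof.
elim=> {phi psi} [phi psi [nu [l [step|step]]]|//|phi psi chi _ IH1 _ IH2].
- exact: fragmentable_plus_step step.
- exact: iff_sym (fragmentable_plus_step step).
- exact: iff_trans IH1 IH2.
Qed.

Theorem proposition5p8 (k : nat) (hk : 1 <= k) (phi : bfun k.+1) :
  simeq phi (@botf k.+1) -> fragmentable phi.
Proof.
move=> /simeq_fragmentable phi_bot; apply/phi_bot/fragmentable_degenerate.
by exists ord0.
Qed.
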